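(* Let $k$ be an algebraically closed field of characteristic zero, $n\ge1$, $q\in k$ a primitive $2n$-th root of unity, $a\in k\setminus\{0\}$, and let $\mathfrak wH_{4n}$ be the algebra generated by $Z,X$ with $Z^{2n+1}=Z$, $ZX=qXZ$, $X^2=0$. For $i\in\mathbb Z_{2n}$ let $S_i$ be the $1$-dimensional module with $X$ acting by $0$ and $Z$ by $q^i$; let $M_i$ be the $2$-dimensional module with basis $v_1^i,v_2^i$, $Xv_1^i=v_2^i$, $Xv_2^i=0$, $Zv_1^i=q^iv_1^i$, $Zv_2^i=q^{i+1}v_2^i$. Let $N_0$ be the $1$-dimensional module on which $Z$ and $X$ act by $0$, and $N_1$ the $2$-dimensional module with basis $w_1,w_2$, $Xw_1=w_2$, $Xw_2=0$, $Zw_1=Zw_2=0$. Then $\{S_i,M_i\mid i\in\mathbb Z_{2n}\}\cup\{N_0,N_1\}$ is a complete list of pairwise non-isomorphic finite-dimensional indecomposable $\mathfrak wH_{4n}$-modules. *)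

From HB Require Import structures.
From mathcomp Require Import all_boot all_order all_algebra.
Set Implicit Arguments. Unset Strict Implicit. Unset Printing Implicit Defensive.
Import GRing.Theory.
Local Open Scope ring_scope.

(* Convention: a d-dimensional module over wH_{4n} is k^d (column vectors)
   together with the matrices Z, X : 'M_d by which the generators act
   (v |-> Z *m v, v |-> X *m v). *)

(* m-th power of a square matrix (works also for d = 0). *)
Definition mxpow (k : nzRingType) (d : nat) (A : 'M[k]_d) (m : nat) : 'M[k]_d :=
  iter m (mulmx A) 1%:M.

Definition wHmod (k : nzRingType) (n : nat) (q : k) (d : nat) (Z X : 'M[k]_d) : Prop :=
  [/\ mxpow Z (2 * n + 1) = Z, Z *m X = q *: (X *m Z) & X *m X = 0].

Definition mod_iso (k : nzRingType) (d1 d2 : nat)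
  (Z1 X1 : 'M[k]_d1) (Z2 X2 : 'M[k]_d2) : Prop :=
  exists (P : 'M[k]_(d1, d2)) (Q : 'M[k]_(d2, d1)),
    [/\ P *m Q = 1%:M, Q *m P = 1%:M, Z1 *m P = P *m Z2 & X1 *m P = P *m X2].

Definition mod_decomposable (k : nzRingType) (n : nat) (q : k) (d : nat) (Z X : 'M[k]_d) : Prop :=
  exists (d1 d2 : nat) (Z1 X1 : 'M[k]_d1) (Z2 X2 : 'M[k]_d2),
    [/\ (0 < d1)%N, (0 < d2)%N, wHmod n q Z1 X1, wHmod n q Z2 X2 &
        mod_iso Z X (block_mx Z1 0 0 Z2) (block_mx X1 0 0 X2)].

Definition mod_indecomposable (k : nzRingType) (n : nat) (q : k) (d : nat) (Z X : 'M[k]_d) : Prop :=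
  [/\ wHmod n q Z X, (0 < d)%N & ~ mod_decomposable n q Z X].

Definition S_Z (k : nzRingType) (q : k) (i : nat) : 'M[k]_1 := (q ^+ i)%:M.
Definition S_X (k : nzRingType) : 'M[k]_1 := 0.
(* M_i : basis v1 = e_0, v2 = e_1; X v1 = v2, X v2 = 0, Z v1 = q^i v1, Z v2 = q^(i+1) v2 *)
Definition M_Z (k : nzRingType) (q : k) (i : nat) : 'M[k]_2 :=
  \matrix_(r < 2, c < 2) (if r == c then q ^+ (i + r) else 0).
Definition M_X (k : nzRingType) : 'M[k]_2 :=
  \matrix_(r < 2, c < 2) (if (r == 1 :> nat) && (c == 0 :> nat) then 1 else 0).
Definition N0_Z (k : nzRingType) : 'M[k]_1 := 0.
Definition N0_X (k : nzRingType) : 'M[k]_1 := 0.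
Definition N1_Z (k : nzRingType) : 'M[k]_2 := 0.
Definition N1_X (k : nzRingType) : 'M[k]_2 := M_X k.

From HB Require Import structures.
From mathcomp Require Import all_boot all_order all_algebra.
Import GRing.Theory.
Set Implicit Arguments.
Unset Strict Implicit.
Unset Printing Implicit Defensive.
Local Open Scope ring_scope.

(* Since q^{2n} = 1, the power Z^{2n} commutes with X as well as with Z, and
   it is idempotent; on an indecomposable module it is therefore 0 or 1.  If
   it is 0 then Z = Z^{2n+1} = 0.  If it is 1, the sums sum_j l^{-j} Z^j
   over l = q^i are 2n times the projections onto the eigenspaces of Z and
   add up to 2n, so Z has an eigenvector v with Xv <> 0 when X <> 0, and
   every eigenvector has a dual left eigenvector.  In either case the projection
   onto the span of v (and Xv) along the kernel of the dual vectors is a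
   nonzero idempotent endomorphism of the module, hence the identity, and
   this identifies the module with S_i, M_i, N_0 or N_1.  The listed modules
   are told apart by their dimension, by whether Z vanishes, and by the
   scalar by which Z acts on the image of X. *)

Lemma mxpowE (k : nzRingType) d (A : 'M[k]_d) m : mxpow A m = A ^+ m.
Proof. by elim: m => //= m IH; rewrite exprS -IH. Qed.

Section MatrixFacts.
Variable k : fieldType.

Lemma idempotent_split d (E : 'M[k]_d) : E *m E = E ->
  exists r (P : 'M[k]_(d, r)) (Q : 'M[k]_(r, d)), Q *m P = 1%:M /\ P *m Q = E.
Proof.
move=> EE; have := mulmx_base E.
move: (col_base E) (row_base E) (col_base_full E) (row_base_free E).
move=> C R C_full R_free CR; exists (\rank E), C, R; split=> //.
apply: (row_free_inj R_free); apply: (row_full_inj C_full).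
by rewrite mul1mx !mulmxA CR -mulmxA CR EE.
Qed.

Lemma exprmx_intertwine d1 d2 (A : 'M[k]_d1) (B : 'M[k]_d2) (P : 'M[k]_(d1, d2)) m :
  A *m P = P *m B -> A ^+ m *m P = P *m B ^+ m.
Proof.
move=> AP; elim: m => [|m IH]; first by rewrite !expr0 mul1mx mulmx1.
by rewrite !exprS -!mulmxE -mulmxA IH mulmxA AP mulmxA.
Qed.

Lemma exprmx_skew_commute d (Z X : 'M[k]_d) (q : k) j :
  Z *m X = q *: (X *m Z) -> Z ^+ j *m X = q ^+ j *: (X *m Z ^+ j).
Proof.
move=> ZX; elim: j => [|j IH]; first by rewrite !expr0 mul1mx mulmx1 scale1r.
rewrite exprSr -mulmxE -mulmxA ZX -scalemxAr !mulmxA IH -scalemxAl scalerA.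
by rewrite exprS.
Qed.

Lemma exists_mulmx_cV_neq0 m p (A : 'M[k]_(m, p)) : A != 0 ->
  exists v : 'cV[k]_p, A *m v != 0.
Proof.
case/matrix0Pn=> i [j Aij]; exists (delta_mx j 0).
by apply/matrix0Pn; exists i, 0; rewrite -colE mxE.
Qed.

Lemma exists_dual_rV d (w : 'cV[k]_d) : w != 0 -> exists f : 'rV[k]_d, f *m w = 1%:M.
Proof.
case/matrix0Pn=> r [c]; rewrite [c]ord1 => wr; exists ((w r 0)^-1 *: delta_mx 0 r).
by rewrite -scalemxAl -rowE [row r w]mx11_scalar mxE scale_scalar_mx mulVf.
Qed.

Lemma mx1_neq0 d : (0 < d)%N -> 1%:M != 0 :> 'M[k]_d.
Proof. by rewrite -mxrank_eq0 mxrank1 -lt0n. Qed.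

Lemma mx11_sqr_eq0 (A : 'M[k]_1) : A *m A = 0 -> A = 0.
Proof.
rewrite [A]mx11_scalar -scalar_mxM => /matrixP/(_ 0 0).
by rewrite !mxE mulr1n => /eqP; rewrite mulf_eq0 orbb => /eqP->; rewrite raddf0.
Qed.

Lemma prim_root_expr_inj N (z : k) (i j : 'I_N) :
  N.-primitive_root z -> z ^+ i = z ^+ j -> i = j.
Proof.
by move=> hz /eqP; rewrite (eq_prim_root_expr hz) !modn_small // => /eqP/val_inj.
Qed.

End MatrixFacts.

Section ModuleMaps.
Variable k : fieldType.

Lemma mod_iso_dim d1 d2 (Z1 X1 : 'M[k]_d1) (Z2 X2 : 'M[k]_d2) :
  mod_iso Z1 X1 Z2 X2 -> d1 = d2.
Proof.
by case=> P [Q [PQ QP _ _]]; apply/eqP; rewrite eqn_leq (mulmx1_min PQ) (mulmx1_min QP).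
Qed.

Lemma mod_iso_scalar d1 d2 (a b : k) (X1 : 'M[k]_d1) (X2 : 'M[k]_d2) :
  (0 < d1)%N -> mod_iso a%:M X1 b%:M X2 -> a = b.
Proof.
case: d1 X1 => // d1 X1 _ [P [Q [PQ _ ZP _]]].
move: ZP; rewrite mul_scalar_mx mul_mx_scalar => /(congr1 (mulmx^~ Q)).
by rewrite -!scalemxAl PQ !scalemx1 => /matrixP/(_ 0 0); rewrite !mxE !mulr1n.
Qed.

Lemma mod_iso_Z0 d1 d2 (Z1 X1 : 'M[k]_d1) (X2 : 'M[k]_d2) :
  mod_iso Z1 X1 0 X2 -> Z1 = 0.
Proof.
case=> P [Q [PQ _ ZP _]]; move: ZP; rewrite mulmx0 => /(congr1 (mulmx^~ Q)).
by rewrite -mulmxA PQ mulmx1 mul0mx.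
Qed.

Lemma mod_iso_X0 d1 d2 (Z1 X1 : 'M[k]_d1) (Z2 : 'M[k]_d2) :
  mod_iso Z1 X1 Z2 0 -> X1 = 0.
Proof.
case=> P [Q [PQ _ _ XP]]; move: XP; rewrite mulmx0 => /(congr1 (mulmx^~ Q)).
by rewrite -mulmxA PQ mulmx1 mul0mx.
Qed.

Lemma mod_iso_ZX_scalar d1 d2 (Z1 X1 : 'M[k]_d1) (Z2 X2 : 'M[k]_d2) (a b : k) :
  mod_iso Z1 X1 Z2 X2 -> Z1 *m X1 = a *: X1 -> Z2 *m X2 = b *: X2 -> X2 != 0 ->
  a = b.
Proof.
case=> P [Q [_ QP ZP XP]] ZX1 ZX2 X2_neq0.
have : (a - b) *: (P *m X2) = 0.
  by rewrite scalerBl -XP scalemxAl -ZX1 -mulmxA XP mulmxA ZP -mulmxA ZX2 scalemxAr subrr.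
move/(congr1 (mulmx Q)); rewrite mulmx0 -scalemxAr mulmxA QP mul1mx.
by move/eqP; rewrite scalemx_eq0 (negbTE X2_neq0) orbF subr_eq0 => /eqP.
Qed.

End ModuleMaps.

Section Decomposition.
Variables (k : fieldType) (n : nat) (q : k).

Lemma wHmod_intertwine d m (Z X : 'M[k]_d) (Z' X' : 'M[k]_m)
    (P : 'M[k]_(d, m)) (Q : 'M[k]_(m, d)) :
  wHmod n q Z X -> Q *m P = 1%:M -> Z *m P = P *m Z' -> X *m P = P *m X' ->
  wHmod n q Z' X'.
Proof.
rewrite /wHmod !mxpowE => -[ZZ ZX XX] QP ZP XP.
have cornerE A B : A *m P = P *m B -> B = Q *m A *m P.
  by move=> AP; rewrite -mulmxA AP mulmxA QP mul1mx.
have mulP A B A' B' : A *m P = P *m A' -> B *m P = P *m B' ->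
    A *m B *m P = P *m (A' *m B').
  by move=> AP BP; rewrite -mulmxA BP mulmxA AP mulmxA.
split.
- by rewrite (cornerE _ _ (exprmx_intertwine _ ZP)) ZZ -(cornerE _ _ ZP).
- rewrite (cornerE _ _ (mulP _ _ _ _ ZP XP)) (cornerE _ _ (mulP _ _ _ _ XP ZP)).
  by rewrite ZX -scalemxAr -scalemxAl.
- by rewrite (cornerE _ _ (mulP _ _ _ _ XP XP)) XX mulmx0 mul0mx.
Qed.

Lemma corner_intertwine d m (P : 'M[k]_(d, m)) (Q : 'M[k]_(m, d)) (A : 'M[k]_d) :
  Q *m P = 1%:M -> A *m (P *m Q) = P *m Q *m A -> A *m P = P *m (Q *m A *m P).
Proof. by move=> QP AE; rewrite !mulmxA -AE -!mulmxA QP mulmx1. Qed.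

Lemma decomposable_of_idempotent d (Z X E : 'M[k]_d) : wHmod n q Z X ->
  E *m E = E -> Z *m E = E *m Z -> X *m E = E *m X -> E != 0 -> E != 1%:M ->
  mod_decomposable n q Z X.
Proof.
move=> hw EE ZE XE E_neq0 E_neq1; pose F := 1%:M - E.
have FF : F *m F = F by rewrite mulmxBl mul1mx mulmxBr mulmx1 EE subrr subr0.
have EF : E *m F = 0 by rewrite mulmxBr mulmx1 EE subrr.
have FE : F *m E = 0 by rewrite mulmxBl mul1mx EE subrr.
have F_neq0 : F != 0 by rewrite subr_eq0 eq_sym.
have commF A : A *m E = E *m A -> A *m F = F *m A.
  by move=> AE; rewrite mulmxBr mulmxBl mulmx1 mul1mx AE.
have [r1 [P1 [Q1 [QP1 PQ1]]]] := idempotent_split EE.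
have [r2 [P2 [Q2 [QP2 PQ2]]]] := idempotent_split FF.
have cross r r' (P : 'M[k]_(d, r)) Q (P' : 'M[k]_(d, r')) Q' :
    Q *m P = 1%:M -> Q' *m P' = 1%:M -> P *m Q *m (P' *m Q') = 0 -> Q *m P' = 0.
  move=> QP QP' /(congr1 (fun M => Q *m M *m P')).
  by rewrite mulmx0 mul0mx !mulmxA QP mul1mx -!mulmxA QP' mulmx1.
have pos r (P : 'M[k]_(d, r)) (Q : 'M[k]_(r, d)) : P *m Q != 0 -> (0 < r)%N.
  by case: r P Q => // P Q; rewrite thinmx0 mul0mx eqxx.
exists r1, r2, (Q1 *m Z *m P1), (Q1 *m X *m P1), (Q2 *m Z *m P2), (Q2 *m X *m P2).
split.
- by apply: (pos _ P1 Q1); rewrite PQ1.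
- by apply: (pos _ P2 Q2); rewrite PQ2.
- by apply: wHmod_intertwine hw QP1 (corner_intertwine QP1 _) (corner_intertwine QP1 _);
    rewrite PQ1.
- by apply: wHmod_intertwine hw QP2 (corner_intertwine QP2 _) (corner_intertwine QP2 _);
    rewrite PQ2 commF.
exists (row_mx P1 P2), (col_mx Q1 Q2); split.
- by rewrite mul_row_col PQ1 PQ2 addrC subrK.
- have Q1P2 : Q1 *m P2 = 0 by apply: cross QP1 QP2 _; rewrite PQ1 PQ2.
  have Q2P1 : Q2 *m P1 = 0 by apply: cross QP2 QP1 _; rewrite PQ1 PQ2.
  by rewrite mul_col_row QP1 QP2 Q1P2 Q2P1 -scalar_mx_block.
- rewrite mul_mx_row mul_row_block !mulmx0 addr0 add0r.
  by rewrite -(corner_intertwine QP1) ?PQ1 // -(corner_intertwine QP2) ?PQ2 ?commF.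
- rewrite mul_mx_row mul_row_block !mulmx0 addr0 add0r.
  by rewrite -(corner_intertwine QP1) ?PQ1 // -(corner_intertwine QP2) ?PQ2 ?commF.
Qed.

End Decomposition.

Lemma wHmod_raise_eigvec (k : fieldType) n (q l : k) d (Z X : 'M[k]_d) (v : 'cV[k]_d) :
  wHmod n q Z X -> Z *m v = l *: v -> Z *m (X *m v) = (q * l) *: (X *m v).
Proof.
by case=> _ ZX _ Zv; rewrite mulmxA ZX -scalemxAl -mulmxA Zv -scalemxAr scalerA.
Qed.

Section Indecomposable.
Variables (k : fieldType) (n : nat) (q : k) (d : nat) (Z X : 'M[k]_d).
Hypotheses (hw : wHmod n q Z X) (hind : ~ mod_decomposable n q Z X).

Lemma indecomposable_idempotent (E : 'M[k]_d) :
  E *m E = E -> Z *m E = E *m Z -> X *m E = E *m X -> E = 0 \/ E = 1%:M.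
Proof.
move=> EE ZE XE; case: (eqVneq E 0) => [|E_neq0]; first by left.
case: (eqVneq E 1%:M) => [|E_neq1]; first by right.
by case: hind; apply: decomposable_of_idempotent hw EE ZE XE E_neq0 E_neq1.
Qed.

Lemma indecomposable_iso m (Z' X' : 'M[k]_m) (P : 'M[k]_(d, m)) (Q : 'M[k]_(m, d)) :
  (0 < m)%N -> Q *m P = 1%:M ->
  Z *m P = P *m Z' -> Q *m Z = Z' *m Q -> X *m P = P *m X' -> Q *m X = X' *m Q ->
  mod_iso Z X Z' X'.
Proof.
move=> m_gt0 QP ZP QZ XP QX; exists P, Q; split=> //.
have comm A A' : A *m P = P *m A' -> Q *m A = A' *m Q -> A *m (P *m Q) = P *m Q *m A.
  by move=> AP QA; rewrite mulmxA AP -!mulmxA QA.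
have PQPQ : P *m Q *m (P *m Q) = P *m Q by rewrite mulmxA -(mulmxA P) QP mulmx1.
case: (indecomposable_idempotent PQPQ (comm _ _ ZP QZ) (comm _ _ XP QX)) => // PQ0.
have : Q *m (P *m Q) *m P = 1%:M by rewrite mulmxA QP mul1mx QP.
by rewrite PQ0 mulmx0 mul0mx => /(congr1 mxrank); rewrite mxrank0 mxrank1 => m0;
  rewrite -m0 in m_gt0.
Qed.

Lemma iso_scalar_of_eigvecs (l : k) (v : 'cV[k]_d) (f : 'rV[k]_d) :
  f *m v = 1%:M -> Z *m v = l *: v -> f *m Z = l *: f -> X *m v = 0 -> f *m X = 0 ->
  mod_iso Z X (l%:M : 'M_1) 0.
Proof.
move=> fv Zv fZ Xv fX; apply: (indecomposable_iso _ fv) => //.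
- by rewrite mul_mx_scalar.
- by rewrite mul_scalar_mx.
- by rewrite mulmx0.
- by rewrite mul0mx.
Qed.

Lemma iso_string_of_eigvecs (l : k) (v : 'cV[k]_d) (f : 'rV[k]_d) : q != 0 ->
  f *m v = 0 -> f *m (X *m v) = 1%:M -> Z *m v = l *: v -> f *m Z = (q * l) *: f ->
  mod_iso Z X (block_mx l%:M 0 0 (q * l)%:M : 'M_(1 + 1)) (block_mx 0 0 1%:M 0).
Proof.
move=> q_neq0 fv fXv Zv fZ; have [_ ZX XX] := hw.
have ZXv := wHmod_raise_eigvec hw Zv.
have fXZ : f *m X *m Z = l *: (f *m X).
  by apply: (scalerI q_neq0); rewrite scalerA -mulmxA scalemxAr -ZX mulmxA fZ -scalemxAl.
have XXv : X *m (X *m v) = 0 by rewrite mulmxA XX mul0mx.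
have fXX : f *m X *m X = 0 by rewrite -mulmxA XX mulmx0.
apply: (indecomposable_iso (P := row_mx v (X *m v)) (Q := col_mx (f *m X) f)) => //.
- by rewrite mul_col_row -!mulmxA XXv fXv fv !mulmx0 -scalar_mx_block.
- by rewrite mul_mx_row mul_row_block !mulmx0 addr0 add0r !mul_mx_scalar Zv ZXv.
- by rewrite mul_col_mx mul_block_col !mul0mx addr0 add0r !mul_scalar_mx fXZ fZ.
- by rewrite mul_mx_row mul_row_block !mulmx0 mulmx1 !add0r XXv.
- by rewrite mul_col_mx mul_block_col !mul0mx mul1mx !addr0 fXX.
Qed.

End Indecomposable.

Lemma sumr_ord_shift (V : zmodType) N (g : nat -> V) : g N = g 0%N ->
  \sum_(j < N) g j.+1 = \sum_(j < N) g j.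
Proof.
move=> gN; apply: (@addrI _ (g 0%N)).
by rewrite -[LHS](big_ord_recl N g) big_ord_recr /= gN addrC.
Qed.

Lemma sum_expr_unity (R : idomainType) (x : R) N : x ^+ N = 1 -> x != 1 ->
  \sum_(i < N) x ^+ i = 0.
Proof.
move=> xN x_neq1; apply/eqP; move: (subrX1 x N).
by rewrite xN subrr => /esym/eqP; rewrite mulf_eq0 subr_eq0 (negbTE x_neq1).
Qed.

Section EigenAverage.
Variables (k : fieldType) (N : nat) (z : k) (d : nat) (Z : 'M[k]_d).
Hypotheses (hz : N.-primitive_root z) (ZN : Z ^+ N = 1).

(* For [l ^+ N = 1], [N] times the projection onto the [l]-eigenspace of [Z]. *)
Definition eigen_avg (l : k) : 'M[k]_d := \sum_(j < N) l ^- j *: Z ^+ j.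

Let unity_neq0 (l : k) : l ^+ N = 1 -> l != 0.
Proof.
move=> lN; apply: contra_eq_neq lN => ->.
by rewrite expr0n eqn0Ngt (prim_order_gt0 hz) eq_sym oner_eq0.
Qed.

Lemma exprmx_eigvec (l : k) (v : 'cV[k]_d) j : Z *m v = l *: v -> Z ^+ j *m v = l ^+ j *: v.
Proof.
rewrite -mul_mx_scalar => /(exprmx_intertwine j) ->.
by rewrite -rmorphXn /= mul_mx_scalar.
Qed.

Lemma eigen_avgC l : eigen_avg l *m Z = Z *m eigen_avg l.
Proof.
rewrite mulmx_suml mulmx_sumr; apply: eq_bigr => j _.
by rewrite -scalemxAl -scalemxAr mulmxE -exprSr exprS.
Qed.

Lemma mulmx_eigen_avg l : l ^+ N = 1 -> Z *m eigen_avg l = l *: eigen_avg l.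
Proof.
move=> lN; have l_neq0 := unity_neq0 lN.
rewrite {2}/eigen_avg -(@sumr_ord_shift _ _ (fun j => l ^- j *: Z ^+ j)) /=; last first.
  by rewrite lN ZN !expr0.
rewrite mulmx_sumr scaler_sumr; apply: eq_bigr => j _.
by rewrite -scalemxAr mulmxE -exprS scalerA [l ^+ j.+1]exprS invfM mulrA mulfV ?mul1r.
Qed.

Lemma eigen_avg_eigvec l (v : 'cV[k]_d) :
  l ^+ N = 1 -> Z *m v = l *: v -> eigen_avg l *m v = N%:R *: v.
Proof.
move=> lN Zv; rewrite mulmx_suml (eq_bigr (fun _ => v)) ?sumr_const ?card_ord ?scaler_nat //.
move=> j _; rewrite -scalemxAl (exprmx_eigvec _ Zv) scalerA.
by rewrite mulVf ?scale1r ?expf_neq0 ?unity_neq0.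
Qed.

Lemma sum_eigen_avg : \sum_(i < N) eigen_avg (z ^+ i) = N%:R *: 1%:M.
Proof.
rewrite /eigen_avg exchange_big (bigD1 (Ordinal (prim_order_gt0 hz))) //=.
rewrite [X in _ + X]big1 ?addr0 => [|j j_neq0].
  rewrite -scaler_suml (eq_bigr (fun _ => 1)) ?sumr_const ?card_ord // => i _.
  by rewrite expr0 invr1.
rewrite -scaler_suml (eq_bigr (fun i : 'I_N => (z ^- j) ^+ i)) => [|i _].
  rewrite sum_expr_unity ?scale0r //.
    by rewrite exprVn -exprM mulnC exprM (prim_expr_order hz) expr1n invr1.
  rewrite invr_eq1 -(expr0 z) (eq_prim_root_expr hz) mod0n modn_small //.
by rewrite exprVn -!exprM mulnC.
Qed.

Lemma exists_eigvec (Y : 'M[k]_d) : Y != 0 ->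
  exists i : 'I_N, exists v : 'cV[k]_d, Z *m v = z ^+ i *: v /\ Y *m v != 0.
Proof.
move=> Y_neq0; have [i Yi_neq0] : exists i : 'I_N, Y *m eigen_avg (z ^+ i) != 0.
  apply/existsP; apply: contraNT Y_neq0; rewrite negb_exists => /forallP Y0.
  have := congr1 (mulmx Y) sum_eigen_avg.
  rewrite mulmx_sumr big1 => [|i _]; last exact/eqP/negPn/Y0.
  move/esym/eqP; rewrite -scalemxAr mulmx1 scalemx_eq0.
  by rewrite (negbTE (prim_root_natf_neq0 hz)).
have [v0 Yv0_neq0] := exists_mulmx_cV_neq0 Yi_neq0.
exists i, (eigen_avg (z ^+ i) *m v0); rewrite !mulmxA mulmx_eigen_avg ?scalemxAl //.
by rewrite exprAC (prim_expr_order hz) expr1n.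
Qed.

Lemma exists_left_eigvec l (w : 'cV[k]_d) : l ^+ N = 1 -> Z *m w = l *: w -> w != 0 ->
  exists f : 'rV[k]_d, f *m Z = l *: f /\ f *m w = 1%:M.
Proof.
move=> lN Zw w_neq0; have [g gw] := exists_dual_rV w_neq0.
exists (N%:R^-1 *: (g *m eigen_avg l)); split.
  rewrite -!scalemxAl -mulmxA eigen_avgC mulmx_eigen_avg // -scalemxAr.
  by rewrite scalerA mulrC -scalerA scalemxAl.
rewrite -scalemxAl -mulmxA eigen_avg_eigvec // -scalemxAr gw scalerA mulVf ?scale1r //.
exact: prim_root_natf_neq0 hz.
Qed.

End EigenAverage.

Section ListedModules.
Variables (k : fieldType) (n : nat) (q : k).
Hypothesis hq : (2 * n).-primitive_root q.

Lemma M_Z_block i :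
  M_Z q i = block_mx (q ^+ i)%:M 0 0 (q ^+ (i + 1))%:M :> 'M_(1 + 1).
Proof.
apply/matrixP=> r c; rewrite !mxE -val_eqE /=.
case: (splitP r) => r' ->; rewrite mxE; case: (splitP c) => c' ->;
  by rewrite [r']ord1 [c']ord1 !mxE /= ?addn0.
Qed.

Lemma M_X_block : M_X k = block_mx 0 0 1%:M 0 :> 'M_(1 + 1).
Proof.
apply/matrixP=> r c; rewrite !mxE.
case: (splitP r) => r' ->; rewrite mxE; case: (splitP c) => c' ->;
  by rewrite [r']ord1 [c']ord1 !mxE.
Qed.

Lemma q_neq0 : q != 0.
Proof. by rewrite (prim_root_eq0 hq) -lt0n (prim_order_gt0 hq). Qed.

Lemma q_neq1 : q != 1.
Proof. by rewrite -[q]expr1 -(prim_order_dvd hq) dvdn1 muln_eq1. Qed.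

Lemma S_Z_neq0 i : S_Z q i != 0.
Proof. by apply/matrix0Pn; exists 0, 0; rewrite mxE /= mulr1n expf_neq0 ?q_neq0. Qed.

Lemma M_Z_neq0 i : M_Z q i != 0.
Proof. by apply/matrix0Pn; exists 0, 0; rewrite mxE /= addn0 expf_neq0 ?q_neq0. Qed.

Lemma M_X_neq0 : M_X k != 0.
Proof. by apply/matrix0Pn; exists 1, 0; rewrite mxE oner_neq0. Qed.

Lemma M_ZX i : M_Z q i *m M_X k = q ^+ (i + 1) *: M_X k.
Proof.
change (@mulmx k (1 + 1) (1 + 1) (1 + 1) (M_Z q i) (M_X k) =
  q ^+ (i + 1) *: (M_X k : 'M_(1 + 1))).
rewrite M_Z_block M_X_block mulmx_block !mulmx0 !mul0mx !mulmx1.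
by rewrite !addr0 add0r scale_block_mx !scaler0 scalemx1.
Qed.

Lemma exprmx_block_diag m1 m2 (A : 'M[k]_m1) (B : 'M[k]_m2) j :
  block_mx A 0 0 B ^+ j = block_mx (A ^+ j) 0 0 (B ^+ j).
Proof.
elim: j => [|j IH]; first by rewrite !expr0 -scalar_mx_block.
by rewrite !exprS IH -!mulmxE mulmx_block !mulmx0 !mul0mx !addr0 !add0r.
Qed.

Lemma qX_order (i : nat) : (q ^+ i) ^+ (2 * n) = 1.
Proof. by rewrite exprAC (prim_expr_order hq) expr1n. Qed.

Lemma qX_period (i : nat) : (q ^+ i) ^+ (2 * n + 1) = q ^+ i.
Proof. by rewrite exprD qX_order mul1r. Qed.

Lemma wHmod_S i : wHmod n q (S_Z q i) (S_X k).
Proof.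
rewrite /wHmod /S_Z /S_X mxpowE -rmorphXn /= qX_period.
by rewrite !mulmx0 mul0mx scaler0.
Qed.

Lemma wHmod_M i : wHmod n q (M_Z q i) (M_X k).
Proof.
change (@wHmod k n q (1 + 1) (M_Z q i) (M_X k)).
rewrite /wHmod mxpowE M_Z_block M_X_block exprmx_block_diag -!rmorphXn /= !qX_period.
split=> //; rewrite !mulmx_block !mulmx0 !mul0mx ?mulmx1 ?mul1mx !addr0 ?block_mx0 //.
by rewrite add0r scale_block_mx !scaler0 scale_scalar_mx [(i + 1)%N]addn1 exprS.
Qed.

Lemma wHmod_N0 : wHmod n q (N0_Z k) (N0_X k).
Proof. by rewrite /wHmod mxpowE expr0n addn_eq0 andbF !mulmx0 scaler0. Qed.

Lemma wHmod_N1 : wHmod n q (N1_Z k) (N1_X k).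
Proof.
change (@wHmod k n q (1 + 1) 0 (M_X k)).
rewrite /wHmod mxpowE expr0n addn_eq0 andbF mulmx0 mul0mx scaler0.
by rewrite M_X_block mulmx_block !mulmx0 !mul0mx !addr0 block_mx0.
Qed.

Lemma iso_S_inj (i j : 'I_(2 * n)) :
  mod_iso (S_Z q i) (S_X k) (S_Z q j) (S_X k) -> i = j.
Proof. by move/(mod_iso_scalar (ltn0Sn 0))/(prim_root_expr_inj hq). Qed.

Lemma iso_M_inj (i j : 'I_(2 * n)) :
  mod_iso (M_Z q i) (M_X k) (M_Z q j) (M_X k) -> i = j.
Proof.
move/mod_iso_ZX_scalar => /(_ _ _ (M_ZX i) (M_ZX j) M_X_neq0).
by rewrite !addn1 !exprS => /(mulfI q_neq0)/(prim_root_expr_inj hq).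
Qed.

End ListedModules.

Section SmallModules.
Variables (k : fieldType) (n : nat) (q : k).

Lemma indecomposable_dim1 (Z X : 'M[k]_1) : wHmod n q Z X -> mod_indecomposable n q Z X.
Proof.
move=> hw; split=> // -[d1 [d2 [Z1 [X1 [Z2 [X2 [d1_gt0 d2_gt0 _ _ /mod_iso_dim]]]]]]].
by case: d1 d2 d1_gt0 d2_gt0 {Z1 X1 Z2 X2} => [|d1] [|d2] //= _ _; rewrite addnS.
Qed.

Lemma indecomposable_dim2 (Z X : 'M[k]_2) : wHmod n q Z X -> X != 0 ->
  mod_indecomposable n q Z X.
Proof.
move=> hw X_neq0; split=> // -[d1 [d2 [Z1 [X1 [Z2 [X2 [d1_gt0 d2_gt0 hw1 hw2 iso]]]]]]].
case: d1 d2 Z1 X1 Z2 X2 d1_gt0 d2_gt0 hw1 hw2 iso => [|[|d1]] [|[|d2]] //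
  Z1 X1 Z2 X2 _ _ [_ _ XX1] [_ _ XX2] iso; move: (mod_iso_dim iso);
  rewrite ?addnS ?addSn // => _.
move: iso; rewrite (mx11_sqr_eq0 XX1) (mx11_sqr_eq0 XX2) block_mx0 => /mod_iso_X0 X0.
by rewrite X0 eqxx in X_neq0.
Qed.

End SmallModules.

Section Classification.
Variables (k : fieldType) (n : nat) (q : k) (d : nat) (Z X : 'M[k]_d).
Hypotheses (hq : (2 * n).-primitive_root q) (hZX : mod_indecomposable n q Z X).

Lemma indecomposable_Z_eq0_or_periodic : Z = 0 \/ Z ^+ (2 * n) = 1.
Proof.
case: hZX => hw _ hind; have [ZZ ZX _] := hw; rewrite mxpowE in ZZ.
move: ZZ (prim_order_gt0 hq) (prim_expr_order hq); case: (2 * n)%N => // m.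
rewrite addn1 => ZZ _ qN.
have TT : Z ^+ m.+1 *m Z ^+ m.+1 = Z ^+ m.+1.
  by rewrite mulmxE -exprD addSn -addnS exprD ZZ -exprSr.
have TZ : Z *m Z ^+ m.+1 = Z ^+ m.+1 *m Z by rewrite mulmxE -exprS -exprSr.
have TX : X *m Z ^+ m.+1 = Z ^+ m.+1 *m X.
  by rewrite (exprmx_skew_commute _ ZX) qN scale1r.
case: (indecomposable_idempotent hw hind TT TZ TX) => [T0|]; last by right.
by left; rewrite -ZZ exprS -mulmxE T0 mulmx0.
Qed.

Lemma indecomposable_Z0 : Z = 0 ->
  mod_iso Z X (N0_Z k) (N0_X k) \/ mod_iso Z X (N1_Z k) (N1_X k).
Proof.
case: hZX => hw d_gt0 hind Z0; have [_ _ XX] := hw.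
have Z0v (v : 'cV[k]_d) : Z *m v = 0 *: v by rewrite Z0 mul0mx scale0r.
have fZ0 (f : 'rV[k]_d) : f *m Z = 0 *: f by rewrite Z0 mulmx0 scale0r.
have scalar0 : (0%:M : 'M[k]_1) = 0 by apply/matrixP=> i j; rewrite !mxE mul0rn.
case: (eqVneq X 0) => [X0|X_neq0].
  left; have [v] := exists_mulmx_cV_neq0 (mx1_neq0 k d_gt0); rewrite mul1mx => v_neq0.
  have [f fv] := exists_dual_rV v_neq0.
  have := iso_scalar_of_eigvecs hw hind fv (Z0v v) (fZ0 f).
  by rewrite X0 mul0mx mulmx0 scalar0; apply.
right; have [v Xv_neq0] := exists_mulmx_cV_neq0 X_neq0.
have [h hXv] := exists_dual_rV Xv_neq0.
pose f := h - h *m v *m (h *m X).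
have fv : f *m v = 0 by rewrite mulmxBl -!mulmxA hXv mulmx1 subrr.
have fXv : f *m (X *m v) = 1%:M.
  by rewrite mulmxBl -!mulmxA hXv [X *m (X *m v)]mulmxA XX mul0mx !mulmx0 subr0.
have := iso_string_of_eigvecs hw hind (q_neq0 hq) fv fXv (Z0v v).
by rewrite mulr0 fZ0 scalar0 block_mx0 -M_X_block; apply.
Qed.

Lemma indecomposable_Z_periodic : Z ^+ (2 * n) = 1 ->
  (exists i : 'I_(2 * n), mod_iso Z X (S_Z q i) (S_X k)) \/
  (exists i : 'I_(2 * n), mod_iso Z X (M_Z q i) (M_X k)).
Proof.
case: hZX => hw d_gt0 hind ZN.
case: (eqVneq X 0) => [X0|X_neq0].
  left; have [i [v [Zv v_neq0]]] := exists_eigvec hq ZN (mx1_neq0 k d_gt0).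
  rewrite mul1mx in v_neq0.
  have [f [fZ fv]] := exists_left_eigvec hq ZN (qX_order hq i) Zv v_neq0.
  by exists i; apply: (iso_scalar_of_eigvecs hw hind fv Zv fZ); rewrite X0 ?mul0mx ?mulmx0.
right; have [i [v [Zv Xv_neq0]]] := exists_eigvec hq ZN X_neq0.
have ZXv := wHmod_raise_eigvec hw Zv.
have qqi_unity : (q * q ^+ i) ^+ (2 * n) = 1 by rewrite -exprS qX_order.
have [f [fZ fXv]] := exists_left_eigvec hq ZN qqi_unity ZXv Xv_neq0.
have fv : f *m v = 0.
  have : (q * q ^+ i - q ^+ i) *: (f *m v) = 0.
    by rewrite scalerBl scalemxAl -fZ -mulmxA Zv -scalemxAr subrr.
  move/eqP; rewrite scalemx_eq0 -{2}[q ^+ i]mul1r -mulrBl mulf_eq0 subr_eq0.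
  by rewrite (negbTE (q_neq1 hq)) expf_eq0 (negbTE (q_neq0 hq)) andbF => /eqP.
exists i; rewrite M_Z_block M_X_block [(i + 1)%N]addn1 exprS.
exact (iso_string_of_eigvecs hw hind (q_neq0 hq) fv fXv Zv fZ).
Qed.

Lemma indecomposable_classification :
  [\/ exists i : 'I_(2 * n), mod_iso Z X (S_Z q i) (S_X k),
      exists i : 'I_(2 * n), mod_iso Z X (M_Z q i) (M_X k),
      mod_iso Z X (N0_Z k) (N0_X k)
    | mod_iso Z X (N1_Z k) (N1_X k)].
Proof.
case: indecomposable_Z_eq0_or_periodic => [/indecomposable_Z0|/indecomposable_Z_periodic].
  by case=> ?; [apply: Or43 | apply: Or44].
by case=> ?; [apply: Or41 | apply: Or42].
Qed.

End Classification.

Theorem proposition4p1 (k : closedFieldType) (hchar : [pchar k] =i pred0)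
  (n : nat) (hn : (1 <= n)%N) (q : k) (hq : (2 * n).-primitive_root q)
  (a : k) (ha : a != 0) :
  (* each listed module is an indecomposable wH_{4n}-module *)
  [/\ (forall i : 'I_(2 * n), mod_indecomposable n q (S_Z q i) (S_X k)),
      (forall i : 'I_(2 * n), mod_indecomposable n q (M_Z q i) (M_X k)),
      mod_indecomposable n q (N0_Z k) (N0_X k)
    & mod_indecomposable n q (N1_Z k) (N1_X k)] /\
  (* pairwise non-isomorphic *)
  [/\ (forall i j : 'I_(2 * n), mod_iso (S_Z q i) (S_X k) (S_Z q j) (S_X k) -> i = j),
      (forall i j : 'I_(2 * n), mod_iso (M_Z q i) (M_X k) (M_Z q j) (M_X k) -> i = j)
    & (forall i j : 'I_(2 * n), ~ mod_iso (S_Z q i) (S_X k) (M_Z q j) (M_X k))] /\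
  [/\
      (forall i : 'I_(2 * n), ~ mod_iso (S_Z q i) (S_X k) (N0_Z k) (N0_X k)),
      (forall i : 'I_(2 * n), ~ mod_iso (S_Z q i) (S_X k) (N1_Z k) (N1_X k)),
      (forall i : 'I_(2 * n), ~ mod_iso (M_Z q i) (M_X k) (N0_Z k) (N0_X k)),
      (forall i : 'I_(2 * n), ~ mod_iso (M_Z q i) (M_X k) (N1_Z k) (N1_X k))
    & ~ mod_iso (N0_Z k) (N0_X k) (N1_Z k) (N1_X k)] /\
  (* completeness *)
  (forall (d : nat) (Z X : 'M[k]_d), mod_indecomposable n q Z X ->
     [\/ exists i : 'I_(2 * n), mod_iso Z X (S_Z q i) (S_X k),
         exists i : 'I_(2 * n), mod_iso Z X (M_Z q i) (M_X k),
         mod_iso Z X (N0_Z k) (N0_X k)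
       | mod_iso Z X (N1_Z k) (N1_X k)]).
Proof.
split; [|split; [|split]].
- split=> [i|i||].
  + exact/indecomposable_dim1/wHmod_S.
  + exact: indecomposable_dim2 (wHmod_M hq i) (M_X_neq0 k).
  + exact/indecomposable_dim1/wHmod_N0.
  + exact: indecomposable_dim2 (wHmod_N1 n q) (M_X_neq0 k).
- split=> [i j|i j|i j /mod_iso_dim //]; [exact: iso_S_inj | exact: iso_M_inj].
- split=> [i /mod_iso_Z0|i /mod_iso_dim|i /mod_iso_dim|i /mod_iso_Z0|/mod_iso_dim] //.
    exact: (elimN eqP (S_Z_neq0 hq i)).
  exact: (elimN eqP (M_Z_neq0 hq i)).
- by move=> d Z X; exact: indecomposable_classification.
Qed.
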